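(* Suppose that $\kappa = \nu^+$, and $\theta$ is a regular infinite cardinal less than $\nu$ such that $d(\theta,\nu) = \nu$. Then $\clubsuit_\kappa^*[NS_\kappa|E^\kappa_\theta]$ holds.
   Context: For cardinals $\tau\leq\mu$ with $\tau\geq1$, $\mu\geq\omega$, $d(\tau,\mu)$ is the least cardinality of an $X\subseteq[\mu]^\tau$ such that every $e\in[\mu]^\tau$ has a subset belonging to $X$. $E^\kappa_\theta$ is the set of limit ordinals below $\kappa$ of cofinality $\theta$; $NS_\kappa|E^\kappa_\theta = \{B\subseteq\kappa : B\cap E^\kappa_\theta \text{ nonstationary}\}$; for an ideal $J$ on $\kappa$, $J^* = \{A : \kappa\setminus A\in J\}$. $acc(\kappa)$ is the set of nonzero limit ordinals below $\kappa$. $\clubsuit_\kappa^*[J]$: there are $s^i_\alpha\subseteq\alpha$ with $\sup s^i_\alpha=\alpha$ for $i<\alpha\in acc(\kappa)$ such that $\{\alpha<\kappa : \exists i<\alpha\,(s^i_\alpha\subseteq A)\}\in J^*$ for every $A\subseteq\kappa$ of size $\kappa$. *)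

(* Ordinals below kappa are modelled as the elements of a type K
   equipped with a strict well-order [lt]; subsets are predicates K -> Prop. *)
From Stdlib Require Import List.

Set Implicit Arguments.

Section Defs.
Variable K : Type.
Variable lt : K -> K -> Prop.

Definition well_order : Prop :=
  well_founded lt /\
  (forall x y z, lt x y -> lt y z -> lt x z) /\
  (forall x y, lt x y \/ x = y \/ lt y x).

Definition le (x y : K) : Prop := x = y \/ lt x y.

Definition setT : K -> Prop := fun _ => True.
Definition seg (a : K) : K -> Prop := fun x => lt x a.
Definition subset {T : Type} (A B : T -> Prop) : Prop := forall x, A x -> B x.

Definition card_le {T U : Type} (A : T -> Prop) (B : U -> Prop) : Prop :=
  exists f : T -> U, (forall x, A x -> B (f x)) /\
    (forall x y, A x -> A y -> f x = f y -> x = y).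
Definition card_eq {T U : Type} (A : T -> Prop) (B : U -> Prop) : Prop :=
  card_le A B /\ card_le B A.
Definition card_lt {T U : Type} (A : T -> Prop) (B : U -> Prop) : Prop :=
  card_le A B /\ ~ card_le B A.

Definition finite_set (A : K -> Prop) : Prop :=
  exists l : list K, forall x, A x -> In x l.

Definition is_cardinal (a : K) : Prop :=
  forall b, lt b a -> card_lt (seg b) (seg a).

Definition cofinal_in (A : K -> Prop) (a : K) : Prop :=
  subset A (seg a) /\ (forall x, lt x a -> exists y, A y /\ le x y).

Definition cof_is (a t : K) : Prop :=
  (exists A, cofinal_in A a /\ card_eq A (seg t)) /\
  (forall A, cofinal_in A a -> card_le (seg t) A).

Definition regular_infinite_cardinal (t : K) : Prop :=
  is_cardinal t /\ ~ finite_set (seg t) /\ cof_is t t.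

Definition is_limit (a : K) : Prop :=
  (exists x, lt x a) /\ (forall x, lt x a -> exists y, lt x y /\ lt y a).

Definition E_cof (t : K) : K -> Prop := fun a => is_limit a /\ cof_is a t.

Definition sized_subset (n t : K) (e : K -> Prop) : Prop :=
  subset e (seg n) /\ card_eq e (seg t).

Definition d_family (t n : K) (X : (K -> Prop) -> Prop) : Prop :=
  (forall e, X e -> sized_subset n t e) /\
  (forall e, sized_subset n t e -> exists x, X x /\ subset x e).

Definition d_eq (t n : K) : Prop :=
  (exists X, d_family t n X /\ card_eq X (seg n)) /\
  (forall X, d_family t n X -> card_le (seg n) X).

Definition club (C : K -> Prop) : Prop :=
  (forall x, exists y, C y /\ lt x y) /\
  (forall a, (exists x, lt x a) ->
     (forall x, lt x a -> exists y, C y /\ lt x y /\ lt y a) -> C a).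

Definition nonstationary (S : K -> Prop) : Prop :=
  exists C, club C /\ forall x, C x -> ~ S x.

Definition NS_restr (E : K -> Prop) (B : K -> Prop) : Prop :=
  nonstationary (fun x => B x /\ E x).

Definition dual_filter (J : (K -> Prop) -> Prop) (A : K -> Prop) : Prop :=
  J (fun x => ~ A x).

(* clubsuit^*_kappa[J] ; s a i = s^i_a *)
Definition clubsuit_star (J : (K -> Prop) -> Prop) : Prop :=
  exists s : K -> K -> (K -> Prop),
    (forall a i, is_limit a -> lt i a -> cofinal_in (s a i) a) /\
    (forall A : K -> Prop, card_eq A setT ->
       dual_filter J (fun a => exists i, lt i a /\ subset (s a i) A)).

End Defs.

From Stdlib Require Import List Lia Classical ClassicalEpsilon Cantor PeanoNat.

(* Fix injections G_a : a -> nu for all a < kappa and an enumeration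
   (x_i)_{i < nu} of a family witnessing d(theta, nu) = nu; the i-th ladder at a
   is G_a^{-1}[x_i].  Given A of size kappa, the limit points of A above nu form
   a club (kappa = nu^+ has uncountable cofinality because omega * nu = nu).  At
   such a limit point a of cofinality theta pick Y included in A, cofinal in a,
   of order type theta.  Then G_a[Y] has size theta, so it contains some x_i,
   whence the ladder G_a^{-1}[x_i] is a subset of Y of size theta, and therefore
   cofinal in a. *)

Lemma card_le_trans {T U V} (A : T -> Prop) (B : U -> Prop) (C : V -> Prop) :
  card_le A B -> card_le B C -> card_le A C.
Proof.
  intros [f [Hf Hfinj]] [g [Hg Hginj]]. exists (fun x => g (f x)). split; auto.
Qed.

Lemma card_le_subset {T U} (A A' : T -> Prop) (B : U -> Prop) :
  subset A A' -> card_le A' B -> card_le A B.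
Proof. intros HAA' [f [Hf Hfinj]]. exists f. split; auto. Qed.

Lemma card_le_of_surj {T U} (A : T -> Prop) (B : U -> Prop) (f : U -> T) :
  inhabited U -> (forall a, A a -> exists b, B b /\ f b = a) -> card_le A B.
Proof.
  intros Hinh Hsurj. exists (fun a => epsilon Hinh (fun b => B b /\ f b = a)). split.
  - intros a Ha. exact (proj1 (epsilon_spec Hinh _ (Hsurj a Ha))).
  - intros a a' Ha Ha' E.
    rewrite <- (proj2 (epsilon_spec Hinh _ (Hsurj a Ha))),
            <- (proj2 (epsilon_spec Hinh _ (Hsurj a' Ha'))), E.
    reflexivity.
Qed.

Lemma infinite_injective_seq {T} (B : T -> Prop) :
  ~ finite_set B ->
  exists e : nat -> T, (forall n, B (e n)) /\ (forall m n, e m = e n -> m = n).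
Proof.
  intro Hinf.
  assert (Hfresh : forall l : list T, exists y, B y /\ ~ In y l).
  { intro l. apply NNPP. intro Hn. apply Hinf. exists l. intros y By.
    apply NNPP. intro Hy. apply Hn. eauto. }
  destruct (choice _ Hfresh) as [fresh Hfr].
  pose (prefix := fix prefix n := match n with 0 => nil | S m => fresh (prefix m) :: prefix m end).
  assert (Hprefix : forall m n, m < n -> In (fresh (prefix m)) (prefix n)).
  { intros m n Hmn. induction n as [|n IH]; [lia|].
    destruct (Nat.eq_dec m n) as [->|Hne]; [left; reflexivity|right; apply IH; lia]. }
  exists (fun n => fresh (prefix n)). split; [intro n; apply Hfr|].
  intros m n E. destruct (Nat.lt_trichotomy m n) as [H|[H|H]]; [exfalso| exact H|exfalso].
  - apply (proj2 (Hfr (prefix n))). rewrite <- E. exact (Hprefix m n H).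
  - apply (proj2 (Hfr (prefix m))). rewrite E. exact (Hprefix n m H).
Qed.

Lemma card_le_add_point {T} (B : T -> Prop) (p : T) :
  ~ finite_set B -> card_le (fun y => B y \/ y = p) B.
Proof.
  intro Hinf. destruct (infinite_injective_seq _ Hinf) as [e [HeB Heinj]].
  pose (idx := fun y => epsilon (inhabits 0) (fun n => y = e n)).
  pose (h := fun y => if excluded_middle_informative (y = p) then e 0
                      else if excluded_middle_informative (exists n, y = e n) then e (S (idx y))
                      else y).
  assert (Hh : forall y, (y = p /\ h y = e 0)
                      \/ (y <> p /\ y = e (idx y) /\ h y = e (S (idx y)))
                      \/ (y <> p /\ (forall n, y <> e n) /\ h y = y)).
  { intro y. unfold h.
    destruct (excluded_middle_informative (y = p)) as [Hp|Hp]; [left; auto|right].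
    destruct (excluded_middle_informative (exists n, y = e n)) as [Hn|Hn].
    - left. repeat split; auto. exact (epsilon_spec _ _ Hn).
    - right. repeat split; auto. intros n Hyn. eauto. }
  exists h. split.
  - intros y Hy. destruct (Hh y) as [[_ ->]|[[_ [_ ->]]|[Hp [_ ->]]]]; auto.
    destruct Hy; congruence.
  - intros y1 y2 _ _ E.
    destruct (Hh y1) as [[? E1]|[[? [? E1]]|[? [N1 E1]]]];
    destruct (Hh y2) as [[? E2]|[[? [? E2]]|[? [N2 E2]]]];
    rewrite E1, E2 in E;
    first [ congruence | apply Heinj in E; congruence
          | destruct (N1 _ E) | destruct (N2 _ (eq_sym E)) ].
Qed.

Lemma closed_seg_le_seg {K} (lt : K -> K -> Prop) (c : K) :
  ~ finite_set (seg lt c) -> card_le (fun y => le lt y c) (seg lt c).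
Proof.
  intro Hinf. apply (card_le_subset _ (fun y => seg lt c y \/ y = c)).
  - intros y [->|Hy]; [right|left]; auto.
  - exact (card_le_add_point _ c Hinf).
Qed.

Section WellOrder.
Context {K : Type} (lt : K -> K -> Prop) (Hwo : well_order lt).

Lemma wo_irrefl x : ~ lt x x.
Proof.
  destruct Hwo as [Hwf _]. induction (Hwf x) as [x _ IH]. intro H. exact (IH x H H).
Qed.

Lemma wo_trans x y z : lt x y -> lt y z -> lt x z.
Proof. destruct Hwo as [_ [Htrans _]]. apply Htrans. Qed.

Lemma wo_trichotomy x y : lt x y \/ x = y \/ lt y x.
Proof. destruct Hwo as [_ [_ Htri]]. apply Htri. Qed.

Lemma wo_least (P : K -> Prop) :
  (exists x, P x) -> exists x, P x /\ forall y, P y -> le lt x y.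
Proof.
  intros [x Px]. destruct Hwo as [Hwf _]. revert Px. induction (Hwf x) as [x _ IH]. intro Px.
  destruct (classic (exists y, P y /\ lt y x)) as [[y [Py Hyx]]|Hmin].
  - exact (IH y Hyx Py).
  - exists x. split; [exact Px|]. intros y Py.
    destruct (wo_trichotomy x y) as [H|[H|H]]; [right|left|exfalso; eauto]; exact H.
Qed.

Lemma wo_not_lt_le x y : ~ lt x y -> le lt y x.
Proof.
  intro H. destruct (wo_trichotomy x y) as [Hxy|[->|Hyx]]; [contradiction|left|right]; auto.
Qed.

Lemma wo_le_lt_trans x y z : le lt x y -> lt y z -> lt x z.
Proof. intros [->|Hxy] Hyz; [exact Hyz|exact (wo_trans x y z Hxy Hyz)]. Qed.

Lemma wo_lt_le_trans x y z : lt x y -> le lt y z -> lt x z.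
Proof. intros Hxy [<-|Hyz]; [exact Hxy|exact (wo_trans x y z Hxy Hyz)]. Qed.

Lemma wo_le_lt_asym x y : le lt x y -> lt y x -> False.
Proof. intros Hxy Hyx. exact (wo_irrefl x (wo_le_lt_trans x y x Hxy Hyx)). Qed.

Definition is_succ (x y : K) : Prop := lt x y /\ forall w, lt x w -> le lt y w.

Definition succ (x : K) : K := epsilon (inhabits x) (is_succ x).

Definition iter_succ (l : K) (n : nat) : K := Nat.iter n succ l.

Definition limit_or_zero (l : K) : Prop := forall x, lt x l -> succ x <> l.

Lemma succ_spec x w : lt x w -> is_succ x (succ x).
Proof.
  intro Hxw. unfold succ. apply epsilon_spec.
  destruct (wo_least (lt x) (ex_intro _ w Hxw)) as [y [Hxy Hmin]]. exists y. split; auto.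
Qed.

Lemma succ_inj x y wx wy : lt x wx -> lt y wy -> succ x = succ y -> x = y.
Proof.
  intros Hx Hy E.
  destruct (succ_spec x wx Hx) as [Hx1 Hx2]. destruct (succ_spec y wy Hy) as [Hy1 Hy2].
  destruct (wo_trichotomy x y) as [H|[H|H]]; [exfalso|exact H|exfalso].
  - apply (wo_le_lt_asym _ _ (Hx2 y H)). rewrite E. exact Hy1.
  - apply (wo_le_lt_asym _ _ (Hy2 x H)). rewrite <- E. exact Hx1.
Qed.

Lemma succ_decomposition a :
  exists l n, le lt l a /\ limit_or_zero l /\ a = iter_succ l n.
Proof.
  destruct Hwo as [Hwf _]. induction (Hwf a) as [a _ IH].
  destruct (classic (exists x, lt x a /\ succ x = a)) as [[x [Hxa Hsx]]|Hlim].
  - destruct (IH x Hxa) as [l [n [Hlx [Hl Hx]]]]. exists l, (S n).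
    split; [right; exact (wo_le_lt_trans l x a Hlx Hxa)|split; [exact Hl|]].
    rewrite <- Hsx, Hx. reflexivity.
  - exists a, 0. split; [left; reflexivity|split; [|reflexivity]].
    intros x Hxa Hsx. apply Hlim. eauto.
Qed.

Section InfiniteCardinal.
Context (nu : K) (Hnu_card : is_cardinal lt nu) (Hnu_inf : ~ finite_set (seg lt nu)).

Lemma infinite_cardinal_limit x : lt x nu -> exists y, lt x y /\ lt y nu.
Proof.
  intro Hx. apply NNPP. intro Hn.
  assert (Hle : forall y, lt y nu -> le lt y x).
  { intros y Hy. apply wo_not_lt_le. intro Hxy. apply Hn. eauto. }
  assert (Hinf : ~ finite_set (seg lt x)).
  { intros [l Hl]. apply Hnu_inf. exists (x :: l). intros y Hy.
    destruct (Hle y Hy) as [->|H]; [left; reflexivity|right; exact (Hl y H)]. }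
  apply (proj2 (Hnu_card x Hx)).
  apply (card_le_trans _ (fun y => le lt y x)); [|exact (closed_seg_le_seg lt x Hinf)].
  exists (fun y => y). split; [exact Hle|auto].
Qed.

Lemma succ_below x : lt x nu -> lt x (succ x) /\ lt (succ x) nu.
Proof.
  intro Hx. destruct (infinite_cardinal_limit x Hx) as [y [Hxy Hy]].
  destruct (succ_spec x y Hxy) as [H1 H2].
  split; [exact H1|exact (wo_le_lt_trans _ _ _ (H2 y Hxy) Hy)].
Qed.

Lemma iter_succ_below l n : lt l nu -> lt (iter_succ l n) nu.
Proof.
  intro Hl. induction n as [|n IH]; [exact Hl|]. exact (proj2 (succ_below _ IH)).
Qed.

Lemma iter_succ_unique l l' n n' :
  lt l nu -> lt l' nu -> limit_or_zero l -> limit_or_zero l' ->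
  iter_succ l n = iter_succ l' n' -> l = l' /\ n = n'.
Proof.
  intros Hl Hl' Ll Ll'. revert n'. induction n as [|n IH]; intros [|n'] E.
  - auto.
  - change (l = succ (iter_succ l' n')) in E. exfalso.
    apply (Ll (iter_succ l' n')); [|congruence].
    rewrite E. exact (proj1 (succ_below _ (iter_succ_below l' n' Hl'))).
  - change (succ (iter_succ l n) = l') in E. exfalso.
    apply (Ll' (iter_succ l n)); [|congruence].
    rewrite <- E. exact (proj1 (succ_below _ (iter_succ_below l n Hl))).
  - change (succ (iter_succ l n) = succ (iter_succ l' n')) in E.
    apply (succ_inj _ _ nu nu (iter_succ_below l n Hl) (iter_succ_below l' n' Hl')) in E.
    destruct (IH n' E) as [-> ->]. auto.
Qed.

(* Writing a < nu as l + n with l limit or zero, (k, l + n) goes to l + <n, k>. *)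
Lemma card_le_nat_seg : card_le (fun p : nat * K => lt (snd p) nu) (seg lt nu).
Proof.
  assert (Hdec : forall a, exists p : K * nat,
             le lt (fst p) a /\ limit_or_zero (fst p) /\ a = iter_succ (fst p) (snd p)).
  { intro a. destruct (succ_decomposition a) as [l [n H]]. exists (l, n). exact H. }
  destruct (choice _ Hdec) as [dec Hdec'].
  exists (fun p => iter_succ (fst (dec (snd p))) (to_nat (snd (dec (snd p)), fst p))).
  split.
  - intros [k a] Ha. destruct (Hdec' a) as [Hle _].
    exact (iter_succ_below _ _ (wo_le_lt_trans _ _ _ Hle Ha)).
  - intros [k a] [k' a'] Ha Ha' E. cbn [fst snd] in *.
    destruct (Hdec' a) as [Hle [Hl Ea]]. destruct (Hdec' a') as [Hle' [Hl' Ea']].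
    destruct (iter_succ_unique _ _ _ _ (wo_le_lt_trans _ _ _ Hle Ha)
                (wo_le_lt_trans _ _ _ Hle' Ha') Hl Hl' E) as [El En].
    assert (Ep := f_equal of_nat En). rewrite !cancel_of_to in Ep.
    injection Ep as En' Ek. congruence.
Qed.

Section SuccessorCardinal.
Context (Hsucc1 : forall a, card_le (seg lt a) (seg lt nu))
        (Hsucc2 : ~ card_le (@setT K) (seg lt nu)).

Lemma closed_seg_le_nu c : card_le (fun y => le lt y c) (seg lt nu).
Proof.
  destruct (Hsucc1 c) as [g [Hg Hginj]].
  assert (Hseg : forall y, le lt y c -> y <> c -> lt y c) by (intros y [->|H] Hne; tauto).
  apply (card_le_trans _ (fun y => le lt y nu)); [|exact (closed_seg_le_seg lt nu Hnu_inf)].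
  exists (fun y => if excluded_middle_informative (y = c) then nu else g y). split.
  - intros y Hy. destruct (excluded_middle_informative (y = c)) as [_|Hne]; [left; reflexivity|].
    right. exact (Hg y (Hseg y Hy Hne)).
  - intros y y' Hy Hy'.
    destruct (excluded_middle_informative (y = c)) as [->|Hne];
    destruct (excluded_middle_informative (y' = c)) as [->|Hne']; intro E.
    + reflexivity.
    + destruct (wo_irrefl nu). rewrite E at 1. exact (Hg y' (Hseg y' Hy' Hne')).
    + destruct (wo_irrefl nu). rewrite <- E at 1. exact (Hg y (Hseg y Hy Hne)).
    + exact (Hginj y y' (Hseg y Hy Hne) (Hseg y' Hy' Hne') E).
Qed.

(* Otherwise kappa is the union of the [0, u n], each of size at most nu,
   so |kappa| <= omega * nu = nu. *)
Lemma omega_bounded (u : nat -> K) : exists b, forall n, lt (u n) b.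
Proof.
  apply NNPP. intro Hunb.
  assert (Hcover : forall y, exists n, le lt y (u n)).
  { intro y. apply NNPP. intro Hy. apply Hunb. exists y. intro n. apply NNPP. intro Hn.
    apply Hy. exists n. exact (wo_not_lt_le _ _ Hn). }
  destruct (choice _ Hcover) as [blk Hblk].
  destruct (choice _ closed_seg_le_nu) as [G HG].
  apply Hsucc2.
  apply (card_le_trans _ (fun p : nat * K => lt (snd p) nu)); [|exact card_le_nat_seg].
  exists (fun y => (blk y, G (u (blk y)) y)). split.
  - intros y _. exact (proj1 (HG _) y (Hblk y)).
  - intros y y' _ _ E. injection E as Eb Ey. rewrite <- Eb in Ey.
    apply (proj2 (HG (u (blk y))) y y' (Hblk y)); [rewrite Eb; apply Hblk|exact Ey].
Qed.

Lemma card_full_unbounded (A : K -> Prop) :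
  card_eq A (@setT K) -> forall y, exists a, A a /\ lt y a.
Proof.
  intros [_ HA] y. apply NNPP. intro Hn.
  destruct (omega_bounded (fun _ => y)) as [b Hb].
  apply Hsucc2. apply (card_le_trans _ A); [exact HA|].
  apply (card_le_trans _ (seg lt b)); [|exact (Hsucc1 b)].
  exists (fun a => a). split; [|auto]. intros a Ha.
  apply (wo_le_lt_trans a y b); [|exact (Hb 0)].
  apply wo_not_lt_le. intro Hya. apply Hn. eauto.
Qed.

End SuccessorCardinal.
End InfiniteCardinal.

Definition acc_point (A : K -> Prop) (a : K) : Prop :=
  forall b, lt b a -> exists x, A x /\ lt b x /\ lt x a.

Section Clubs.
Context (Homega : forall u : nat -> K, exists b, forall n, lt (u n) b)
        (A : K -> Prop) (HA : forall y, exists a, A a /\ lt y a).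

Lemma acc_points_unbounded x : exists al, lt x al /\ acc_point A al.
Proof.
  destruct (choice _ HA) as [nx Hnx].
  pose (u := fun n => Nat.iter (S n) nx x).
  destruct (wo_least (fun y => forall n, lt (u n) y) (Homega u)) as [al [Hub Hleast]].
  exists al. split.
  - exact (wo_trans x (u 0) al (proj2 (Hnx x)) (Hub 0)).
  - intros b Hb.
    assert (Hn : ~ forall n, lt (u n) b) by (intro H; exact (wo_le_lt_asym _ _ (Hleast b H) Hb)).
    apply not_all_ex_not in Hn. destruct Hn as [n Hn]. apply wo_not_lt_le in Hn.
    exists (u (S n)). split; [exact (proj1 (Hnx (u n)))|split; [|exact (Hub (S n))]].
    exact (wo_le_lt_trans b (u n) (u (S n)) Hn (proj2 (Hnx (u n)))).
Qed.

Lemma club_acc_points_above z : club lt (fun al => lt z al /\ acc_point A al).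
Proof.
  split.
  - intro x.
    assert (Hm : exists m, le lt x m /\ le lt z m).
    { destruct (wo_trichotomy x z) as [H|[->|H]]; [exists z|exists z|exists x]; unfold le; auto. }
    destruct Hm as [m [Hxm Hzm]]. destruct (acc_points_unbounded m) as [al [Hmal Hal]].
    exists al. split; [split; [|exact Hal]|]; eapply wo_le_lt_trans; eauto.
  - intros a [x Hx] Hcl. split.
    + destruct (Hcl x Hx) as [y [[Hzy _] [_ Hya]]]. exact (wo_trans _ _ _ Hzy Hya).
    + intros b Hb. destruct (Hcl b Hb) as [y [[_ Hy] [Hby Hya]]].
      destruct (Hy b Hby) as [c [Ac [Hbc Hcy]]].
      exists c. split; [exact Ac|split; [exact Hbc|exact (wo_trans _ _ _ Hcy Hya)]].
Qed.

End Clubs.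

(* i.e. Y has order type at most theta *)
Definition small_initial_segments (theta : K) (Y : K -> Prop) (a : K) : Prop :=
  forall b, lt b a -> exists g, lt g theta /\ card_le (fun y => Y y /\ lt y b) (seg lt g).

(* Keep the d in D lying above every element of D enumerated (by pi) before d:
   those below b are all enumerated before some fixed element of D above b. *)
Lemma cofinal_small_initial_segments al theta :
  cof_is lt al theta ->
  exists D, cofinal_in lt D al /\ card_le D (seg lt theta) /\ small_initial_segments theta D al.
Proof.
  intros [[D [[HDal HDcof] [[pi [Hpi Hpiinj]] _]]] _].
  exists (fun d => D d /\ forall d', D d' -> lt (pi d') (pi d) -> lt d' d).
  split; [split|split].
  - intros d [Dd _]. exact (HDal d Dd).
  - intros x Hx. destruct (HDcof x Hx) as [d1 [Dd1 Hxd1]].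
    destruct (wo_least (fun j => exists d, D d /\ le lt x d /\ pi d = j)
                (ex_intro _ _ (ex_intro _ d1 (conj Dd1 (conj Hxd1 eq_refl)))))
      as [j [[d [Dd [Hxd <-]]] Hmin]].
    exists d. split; [split; [exact Dd|]|exact Hxd].
    intros d' Dd' Hlt. apply (wo_lt_le_trans d' x d); [|exact Hxd].
    apply NNPP. intro Hn. apply (wo_le_lt_asym (pi d) (pi d')); [|exact Hlt].
    apply Hmin. exists d'. split; [exact Dd'|split; [exact (wo_not_lt_le _ _ Hn)|reflexivity]].
  - exists pi. split; [intros d [Dd _]; exact (Hpi d Dd)|].
    intros d d' [Dd _] [Dd' _]. exact (Hpiinj d d' Dd Dd').
  - intros b Hb. destruct (HDcof b Hb) as [d0 [Dd0 Hbd0]].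
    exists (pi d0). split; [exact (Hpi d0 Dd0)|]. exists pi. split.
    + intros d [[Dd Hrec] Hdb].
      destruct (wo_trichotomy (pi d) (pi d0)) as [H|[H|H]]; [exact H|exfalso|exfalso].
      * assert (d = d0) as -> by exact (Hpiinj d d0 Dd Dd0 H).
        exact (wo_le_lt_asym _ _ Hbd0 Hdb).
      * apply (wo_le_lt_asym b d); [|exact Hdb].
        right. exact (wo_le_lt_trans _ _ _ Hbd0 (Hrec d0 Dd0 H)).
    + intros d d' [[Dd _] _] [[Dd' _] _]. exact (Hpiinj d d' Dd Dd').
Qed.

Lemma acc_point_cofinal_subset A al theta :
  acc_point A al -> cof_is lt al theta ->
  exists Y, subset Y A /\ cofinal_in lt Y al /\ card_eq Y (seg lt theta)
            /\ small_initial_segments theta Y al.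
Proof.
  intros Hacc Hcof.
  destruct (cofinal_small_initial_segments al theta Hcof) as [D [[HDal HDcof] [HDth HDsmall]]].
  assert (Hnext : forall d, exists a, lt d al -> A a /\ lt d a /\ lt a al).
  { intro d. destruct (classic (lt d al)) as [Hd|Hd]; [|exists d; tauto].
    destruct (Hacc d Hd) as [a Ha]. exists a. intros _. exact Ha. }
  destruct (choice _ Hnext) as [nx Hnx].
  pose (Y := fun a => exists d, D d /\ a = nx d).
  assert (HY : forall a, Y a -> A a /\ lt a al).
  { intros a [d [Dd ->]]. destruct (Hnx d (HDal d Dd)) as [Ha [_ Hal]]. auto. }
  assert (HYcof : cofinal_in lt Y al).
  { split; [intros a Ha; exact (proj2 (HY a Ha))|].
    intros x Hx. destruct (HDcof x Hx) as [d [Dd Hxd]].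
    destruct (Hnx d (HDal d Dd)) as [_ [Hd _]].
    exists (nx d). split; [exists d; auto|right; exact (wo_le_lt_trans x d (nx d) Hxd Hd)]. }
  exists Y. split; [intros a Ha; exact (proj1 (HY a Ha))|].
  split; [exact HYcof|]. split; [split|].
  - apply (card_le_trans Y D); [|exact HDth].
    apply (card_le_of_surj Y D nx (inhabits al)). intros a [d [Dd ->]]. eauto.
  - exact (proj2 Hcof Y HYcof).
  - intros b Hb. destruct (HDsmall b Hb) as [g [Hg Hsmall]]. exists g. split; [exact Hg|].
    apply (card_le_trans _ (fun d => D d /\ lt d b)); [|exact Hsmall].
    apply (card_le_of_surj _ _ nx (inhabits al)). intros a [[d [Dd ->]] Hab].
    exists d. split; [split; [exact Dd|]|reflexivity].
    exact (wo_trans d (nx d) b (proj1 (proj2 (Hnx d (HDal d Dd)))) Hab).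
Qed.

Lemma d_eq_enumeration theta nu :
  d_eq lt theta nu ->
  exists xs : K -> (K -> Prop), forall e, sized_subset lt nu theta e ->
    exists i, lt i nu /\ subset (xs i) e /\ card_le (seg lt theta) (xs i).
Proof.
  intros [[X [[HXsized HXcover] [[h [Hh Hhinj]] _]]] _].
  pose (xs := fun i => epsilon (inhabits (fun _ : K => False)) (fun x => X x /\ h x = i)).
  exists xs. intros e He. destruct (HXcover e He) as [x [Xx Hxe]].
  assert (Hxs : xs (h x) = x).
  { assert (Hspec : X (xs (h x)) /\ h (xs (h x)) = h x) by (apply epsilon_spec; eauto).
    apply Hhinj; tauto. }
  exists (h x). rewrite Hxs.
  split; [exact (Hh x Xx)|split; [exact Hxe|exact (proj2 (proj2 (HXsized x Xx)))]].
Qed.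

Section Ladders.
Context (nu theta : K) (Htheta : is_cardinal lt theta) (G : K -> K -> K)
  (HG : forall a, (forall x, seg lt a x -> seg lt nu (G a x))
                  /\ (forall x y, seg lt a x -> seg lt a y -> G a x = G a y -> x = y))
  (xs : K -> (K -> Prop))
  (Hxs : forall e, sized_subset lt nu theta e ->
           exists i, lt i nu /\ subset (xs i) e /\ card_le (seg lt theta) (xs i)).

Definition ladder (a i : K) : K -> Prop := fun y => lt y a /\ xs i (G a y).

Lemma ladder_guess al Y :
  lt nu al -> cofinal_in lt Y al -> card_eq Y (seg lt theta) ->
  small_initial_segments theta Y al ->
  exists i, lt i al /\ cofinal_in lt (ladder al i) al /\ subset (ladder al i) Y.
Proof.
  intros Hnu [HYal HYcof] [HYth HthY] Hsmall.
  destruct (HG al) as [HGal HGinj].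
  pose (e := fun z => exists y, Y y /\ G al y = z).
  assert (He : sized_subset lt nu theta e).
  { split; [|split].
    - intros z [y [Yy <-]]. exact (HGal y (HYal y Yy)).
    - apply (card_le_trans e Y); [|exact HYth].
      apply (card_le_of_surj e Y (G al) (inhabits al)). intros z [y [Yy <-]]. eauto.
    - apply (card_le_trans _ Y); [exact HthY|]. exists (G al).
      split; [intros y Yy; exists y; auto|].
      intros y y' Yy Yy'. exact (HGinj y y' (HYal y Yy) (HYal y' Yy')). }
  destruct (Hxs e He) as [i [Hi [Hie Hthi]]].
  assert (Hsub : subset (ladder al i) Y).
  { intros y [Hy Hxy]. destruct (Hie _ Hxy) as [y' [Yy' Ey]].
    rewrite <- (HGinj y' y (HYal y' Yy') Hy Ey). exact Yy'. }
  exists i. split; [exact (wo_trans i nu al Hi Hnu)|]. split; [|exact Hsub].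
  split; [intros y [Hy _]; exact Hy|].
  (* a bounded ladder would lie in a bounded part of Y, of size < theta *)
  intros b Hb. apply NNPP. intro Hbnd.
  destruct (Hsmall b Hb) as [g [Hg Hsmallb]].
  apply (proj2 (Htheta g Hg)).
  apply (card_le_trans _ (xs i)); [exact Hthi|].
  apply (card_le_trans _ (fun y => Y y /\ lt y b)); [|exact Hsmallb].
  apply (card_le_of_surj _ _ (G al) (inhabits al)). intros z Hz.
  destruct (Hie z Hz) as [y [Yy Ey]]. exists y. split; [split; [exact Yy|]|exact Ey].
  apply NNPP. intro Hyb. apply Hbnd. exists y.
  split; [split; [exact (HYal y Yy)|rewrite Ey; exact Hz]|exact (wo_not_lt_le _ _ Hyb)].
Qed.

End Ladders.
End WellOrder.

Theorem corollary3p27 (K : Type) (lt : K -> K -> Prop) (nu theta : K)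
  (Hwo : well_order lt)
  (* kappa (= K) is the successor cardinal nu^+ *)
  (Hnu_card : is_cardinal lt nu)
  (Hnu_inf : ~ finite_set (seg lt nu))
  (Hsucc1 : forall a, card_le (seg lt a) (seg lt nu))
  (Hsucc2 : ~ card_le (setT (K:=K)) (seg lt nu))
  (* theta regular infinite, theta < nu, d(theta,nu) = nu *)
  (Htheta : regular_infinite_cardinal lt theta)
  (Htn : lt theta nu)
  (Hd : d_eq lt theta nu) :
  clubsuit_star lt (NS_restr lt (E_cof lt theta)).
Proof.
  destruct Htheta as [Htheta_card _].
  assert (Homega := omega_bounded lt Hwo nu Hnu_card Hnu_inf Hsucc1 Hsucc2).
  destruct (choice _ Hsucc1) as [G HG].
  destruct (d_eq_enumeration lt theta nu Hd) as [xs Hxs].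
  pose (s := fun a i => if excluded_middle_informative (cofinal_in lt (ladder lt G xs a i) a)
                        then ladder lt G xs a i else seg lt a).
  exists s. split.
  - intros a i _ _. unfold s. destruct (excluded_middle_informative _) as [Hcof|_]; [exact Hcof|].
    split; [intros x Hx; exact Hx|intros x Hx; exists x; split; [exact Hx|left; reflexivity]].
  - intros A HA. unfold dual_filter, NS_restr, nonstationary.
    exists (fun al => lt nu al /\ acc_point lt A al). split.
    + exact (club_acc_points_above lt Hwo Homega A
               (card_full_unbounded lt Hwo nu Hnu_card Hnu_inf Hsucc1 Hsucc2 A HA) nu).
    + intros al [Hnu_al Hacc] [Hmiss [_ Hcof]]. apply Hmiss.
      destruct (acc_point_cofinal_subset lt Hwo A al theta Hacc Hcof)
        as [Y [HYA [HYcof [HYcard HYsmall]]]].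
      destruct (ladder_guess lt Hwo nu theta Htheta_card G HG xs Hxs al Y
                  Hnu_al HYcof HYcard HYsmall) as [i [Hi [Hlcof Hlsub]]].
      exists i. split; [exact Hi|]. unfold s.
      destruct (excluded_middle_informative _) as [_|Hn]; [|contradiction].
      intros y Hy. exact (HYA y (Hlsub y Hy)).
Qed.
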